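(* Let $P$ be a connected shrub on a finite set $I$ with at least two elements. Then there exists a vertex of height $1$ that covers every vertex of height $0$ of $P$.
   Context: A shrub $P$ on a finite set $I$ is a set $E$ of edges (unordered pairs $\{i,j\}$ of distinct elements of $I$) together with a height function $h_P:I\to\mathbb{N}$. Say that $j$ covers $i$ if $\{i,j\}\in E$ and $h_P(j)=h_P(i)+1$. The axioms are: (1) if $\{i,j\}\in E$ then $h_P(i)=h_P(j)\pm 1$; (2) if $h_P(j)>0$ then there is an edge $\{i,j\}$ with $h_P(i)=h_P(j)-1$; (3) there are no four distinct vertices $a,b,c,d$ such that $a$ covers $b$ and $c$, $c$ covers $d$, and $\{b,d\}\notin E$; (4) there are no five distinct vertices $a,b,c,d,e$ such that $a$ covers $c$ and $d$, $b$ covers $d$ and $e$, $\{a,e\}\notin E$ and $\{b,c\}\notin E$. A shrub is connected if its underlying graph $(I,E)$ is connected. *)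

From mathcomp Require Import all_boot.
Set Implicit Arguments. Unset Strict Implicit. Unset Printing Implicit Defensive.

Definition simple_graph (I : finType) (E : rel I) : Prop :=
  (forall i, ~~ E i i) /\ (forall i j, E i j = E j i).

Definition covers (I : finType) (E : rel I) (h : I -> nat) (j i : I) : bool :=
  E i j && (h j == (h i).+1).

Definition is_shrub (I : finType) (E : rel I) (h : I -> nat) : Prop :=
  simple_graph E /\
  (forall i j, E i j -> h i = (h j).+1 \/ h j = (h i).+1) /\
  (forall j, 0 < h j -> exists i, E i j /\ (h i).+1 = h j) /\
  (forall a b c d : I, uniq [:: a; b; c; d] ->
     covers E h a b -> covers E h a c -> covers E h c d -> E b d) /\
  (forall a b c d e : I, uniq [:: a; b; c; d; e] ->
     covers E h a c -> covers E h a d -> covers E h b d -> covers E h b e ->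
     ~ (~~ E a e /\ ~~ E b c)).

Definition graph_connected (I : finType) (E : rel I) : Prop :=
  forall i j : I, connect E i j.

From mathcomp Require Import all_boot zify.

Set Implicit Arguments.
Unset Strict Implicit.
Unset Printing Implicit Defensive.

(* Take a vertex [a] of height 1 with the largest number of children. Axiom (4)
   says that two vertices sharing a child have comparable sets of children, so
   by maximality [a] has all the children of any height-1 vertex meeting its
   own. Axiom (3) lets a covering edge [u -> v] transfer a descending path from
   [u] to a child of [a] into one from [v]; hence "descends to a child of [a]"
   is invariant along edges, thus holds everywhere by connectivity, and a
   height-0 vertex can only descend to itself. *)

Section Shrub.

Variables (I : finType) (E : rel I) (h : I -> nat).

Hypothesis E_sym : symmetric E.
Hypothesis edge_height : forall i j, E i j -> h i = (h j).+1 \/ h j = (h i).+1.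
Hypothesis edge_down : forall j, 0 < h j -> exists i, E i j /\ (h i).+1 = h j.
Hypothesis shrub_ax3 : forall a b c d : I, uniq [:: a; b; c; d] ->
  covers E h a b -> covers E h a c -> covers E h c d -> E b d.
Hypothesis shrub_ax4 : forall a b c d e : I, uniq [:: a; b; c; d; e] ->
  covers E h a c -> covers E h a d -> covers E h b d -> covers E h b e ->
  ~ (~~ E a e /\ ~~ E b c).

Local Notation cov := (covers E h).

Definition children (a : I) : {set I} := [set y | cov a y].

Lemma covers_height x y : cov x y -> h x = (h y).+1.
Proof. by case/andP=> _ /eqP. Qed.

Lemma edge_covers x y : E x y -> h x = (h y).+1 -> cov x y.
Proof. by move=> Exy hxy; rewrite /covers E_sym Exy hxy eqxx. Qed.

Lemma covers_sibling_child u v w d : cov u v -> cov u w -> cov w d -> cov v d.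
Proof.
move=> cuv cuw cwd; have [-> //|vw] := eqVneq v w.
have hv := covers_height cuv; have hw := covers_height cuw.
have hd := covers_height cwd.
apply: edge_covers; last by lia.
apply: (shrub_ax3 _ cuv cuw cwd).
rewrite /= !inE !negb_or vw.
by repeat (apply/andP; split) => //; apply/eqP => /(congr1 h);
  clear -hv hw hd; lia.
Qed.

Lemma children_comparable a b d : cov a d -> cov b d ->
  children b \subset children a \/ children a \subset children b.
Proof.
move=> cad cbd; have [|/subsetPn[e be ae]] := boolP (children b \subset _).
  by left.
right; apply/subsetP=> c ac; apply/negPn/negP=> bc.
rewrite !inE in ae be ac bc.
have hd := covers_height cad; have hbd := covers_height cbd.
have hc := covers_height ac; have he := covers_height be.
apply: (shrub_ax4 _ ac cad cbd be); last first.
  split; apply/negP => Exy; [move/negP: ae|move/negP: bc]; apply;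
    apply: edge_covers Exy _; lia.
have ab : a != b by apply: contraNneq ae => ->.
have cd : c != d by apply: contraNneq bc => ->.
have ed : e != d by apply: contraNneq ae => ->.
have ce : c != e by apply: contraNneq ae => <-.
rewrite /= !inE !negb_or ab cd ce (eq_sym d e) ed.
by repeat (apply/andP; split) => //; apply/eqP => /(congr1 h);
  clear -hd hbd hc he; lia.
Qed.

Lemma children_sub_max a b d :
    (forall x, h x = h a -> #|children x| <= #|children a|) ->
  cov a d -> cov b d -> children b \subset children a.
Proof.
move=> amax cad cbd; have [//|sab] := children_comparable cad cbd.
have hab : h b = h a by rewrite (covers_height cad) (covers_height cbd).
have /eqP -> // : children a == children b.
by rewrite eqEcard sab amax.
Qed.

Lemma connect_coversP x y : connect cov x y ->
  x = y \/ exists2 z, cov x z & connect cov z y.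
Proof.
case/connectP=> [[|z p]] /= => [_ ->|/andP[cxz pzy] ->]; first by left.
by right; exists z => //; apply/connectP; exists p.
Qed.

Lemma connect_covers_height0 x y : connect cov x y -> h x = 0 -> x = y.
Proof. by case/connect_coversP=> [//|[z /covers_height ->]]. Qed.

Lemma connect_covers_height1 u s : connect cov u s -> h u = 1 -> h s = 0 ->
  cov u s.
Proof.
case/connect_coversP=> [-> -> //|[z cuz /connect_covers_height0 zs hu _]].
by rewrite -zs //; move: (covers_height cuz); rewrite hu => -[].
Qed.

Lemma sibling_descends u v s : cov u v -> connect cov u s -> h s = 0 ->
  0 < h v -> connect cov v s.
Proof.
move=> cuv /connect_coversP[<-|[w cuw]]; first by rewrite (covers_height cuv).
have hvw : h w = h v.
  by move: (covers_height cuv); rewrite (covers_height cuw) => -[].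
case/connect_coversP=> [<- hw|[d cwd ds _ _]]; first by rewrite -hvw hw.
exact: connect_trans (connect1 (covers_sibling_child cuv cuw cwd)) ds.
Qed.

Section MaximalVertex.

Variable a : I.
Hypothesis a_height1 : h a = 1.
Hypothesis a_max : forall x, h x = h a -> #|children x| <= #|children a|.

Definition descends_to_children (v : I) : bool :=
  [exists s, (s \in children a) && connect cov v s].

Lemma descends_to_children_edge u v : E u v ->
  descends_to_children u -> descends_to_children v.
Proof.
move=> Euv /existsP[s /andP[s_child us]]; rewrite inE in s_child.
have hs : h s = 0 by move: (covers_height s_child); rewrite a_height1 => -[].
apply/existsP; case: (edge_height Euv) => huv; last first.
  have cvu : cov v u by apply: edge_covers; rewrite // E_sym.
  by exists s; rewrite inE s_child (connect_trans (connect1 cvu) us).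
have cuv := edge_covers Euv huv.
case hv: (h v) => [|k]; last first.
  by exists s; rewrite inE s_child (sibling_descends cuv us) ?hv.
have cus : cov u s by apply: connect_covers_height1; rewrite ?huv ?hv.
have /subsetP sub := children_sub_max a_max s_child cus.
by exists v; rewrite sub ?inE ?connect0.
Qed.

Lemma descends_to_children_closed : closed E descends_to_children.
Proof.
by move=> u v Euv; apply/idP/idP; apply: descends_to_children_edge;
  rewrite // E_sym.
Qed.

End MaximalVertex.

Lemma exists_height0 (x : I) : exists z, h z = 0.
Proof.
elim: {x}(h x) {-2}x (erefl (h x)) => [|n IH] x hx; first by exists x.
have [|y [_ hy]] := @edge_down x; first by rewrite hx.
by apply: (IH y); apply/eqP; rewrite -eqSS hy hx.
Qed.

Lemma exists_height1 : graph_connected E -> 1 < #|I| -> exists x, h x = 1.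
Proof.
move=> conn cardI; have [x0 _] : exists x : I, x \in predT.
  by apply/card_gt0P; apply: ltnW.
have [z hz] := exists_height0 x0.
have [y] : exists y, y \in predC1 z.
  by apply/card_gt0P; rewrite cardC1 -ltnS (ltn_predK cardI).
rewrite !inE => yz; case/connectP: (conn z y) => [[|x p]] /= => [_ yz'|].
  by rewrite yz' eqxx in yz.
by case/andP=> Ezx _ _; exists x; case: (edge_height Ezx); rewrite hz.
Qed.

Lemma connected_shrub_cover_height0 : graph_connected E -> 1 < #|I| ->
  exists v, h v = 1 /\ forall u, h u = 0 -> cov v u.
Proof.
move=> conn cardI; have [x1 /eqP hx1] := exists_height1 conn cardI.
case: (@arg_maxnP _ x1 (fun x => h x == 1) (fun x => #|children x|) hx1)
  => a /eqP ha amax.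
have {}amax x : h x = h a -> #|children x| <= #|children a|.
  by rewrite ha => /eqP; apply: amax.
exists a; split=> // z hz.
have [|s [Esa hs]] := @edge_down a; first by rewrite ha.
have s_child : s \in children a by rewrite inE edge_covers 1?E_sym.
have /existsP[t /andP[t_child zt]] : z \in descends_to_children a.
  rewrite -(closed_connect (descends_to_children_closed ha amax) (conn s z)).
  by apply/existsP; exists s; rewrite s_child connect0.
by rewrite inE -(connect_covers_height0 zt hz) in t_child.
Qed.

End Shrub.

Theorem mainTheorem1 (I : finType) (E : rel I) (h : I -> nat) :
  is_shrub E h -> graph_connected E -> 1 < #|I| ->
  exists v : I, h v = 1 /\ forall u : I, h u = 0 -> covers E h v u.
Proof.
move=> [[_ E_sym] [edge_height [edge_down [ax3 ax4]]]].
exact: connected_shrub_cover_height0.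
Qed.
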